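(* Let $\mathscr{D}$ be a commutative variety whose full subcategory $\mathscr{D}_f$ of finitely presentable objects is closed under subobjects, strong quotients and finite products. For any language $L:X^{\circledast}\to Y$ the following are equivalent: (a) $L$ is $\mathscr{D}$-regular; (b) the minimal $\mathscr{D}$-automaton $\mathrm{Min}(L)$ has finitely presentable carrier; (c) $L$ is recognized by some $\mathscr{D}$-monoid morphism $e:X^{\circledast}\to M$ with $M$ finitely presentable; (d) the syntactic $\mathscr{D}$-monoid $\mathrm{Syn}(L)$ has finitely presentable carrier.
   Context: A commutative variety $\mathscr{D}$ is a variety of finitary algebras in which for all $A,B$ the hom-set $\mathscr{D}(A,B)$ is a subalgebra $[A,B]$ of $B^{|A|}$; it is symmetric monoidal closed with tensor product $\otimes$ representing bimorphisms and unit $I=\Psi1$. An object is finitely presentable if it is an algebra presentable by finitely many generators and relations. Fix objects $X,Y$. $X^{\circledast}$ is the free $\mathscr{D}$-monoid (monoid object in $(\mathscr{D},\otimes,I)$) on $X$. A language is a morphism $L:X^{\circledast}\to Y$; it is recognized by a $\mathscr{D}$-monoid morphism $e:X^{\circledast}\to M$ if $L=f\cdot e$ for some $\mathscr{D}$-morphism $f:M\to Y$. A $\mathscr{D}$-automaton $(Q,\delta,i,f)$ has $\delta:X\otimes Q\to Q$, $i:I\to Q$, $f:Q\to Y$ and accepts $L_Q=f\cdot e_Q$ where $e_Q:X^{\circledast}\to Q$ is the unique algebra homomorphism for $FQ=I+X\otimes Q$ from the initial $F$-algebra $X^{\circledast}$. $L$ is $\mathscr{D}$-regular if it is accepted by some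 $\mathscr{D}$-automaton with finitely presentable state object. $\mathrm{Min}(L)$ is the (unique up to iso) automaton accepting $L$ that is reachable ($e_Q$ surjective) and simple (the unique coalgebra homomorphism into the final coalgebra $[X^{\circledast},Y]$ for $TQ=Y\times[X,Q]$ is injective). $\mathrm{Syn}(L)$ is the smallest quotient of $X^{\circledast}$ in $\mathbf{Mon}(\mathscr{D})$ recognizing $L$ (quotients ordered by factorization). *)

From Stdlib Require List.
From mathcomp Require Import all_boot.
Unset Printing Implicit Defensive.

Record signature := Signature { sym : Type; arity : sym -> nat }.

Inductive term (S : signature) (V : Type) : Type :=
| tvar : V -> term S V
| top : forall s : sym S, ('I_(arity S s) -> term S V) -> term S V.

Record alg (S : signature) := Alg {
  car :> Type;
  ops : forall s : sym S, ('I_(arity _ s) -> car) -> car }.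
Arguments car {S} _.
Arguments ops {S} a s _.

Fixpoint eval (S : signature) (V : Type) (A : alg S) (v : V -> A) (t : term S V) : A :=
  match t with
  | tvar x => v x
  | top s ts => ops A s (fun i => eval S V A v (ts i))
  end.
Arguments eval {S V A} v t.
Arguments tvar {S V} _.
Arguments top {S V} s _.

Record variety := Variety {
  vsig : signature;
  veqs : term vsig nat -> term vsig nat -> Prop }.


Definition model (D : variety) (A : alg (vsig D)) : Prop :=
  forall l r, veqs D l r -> forall v : nat -> A, eval v l = eval v r.

Definition hom (S : signature) (A B : alg S) (h : A -> B) : Prop :=
  forall s (args : 'I_(arity _ s) -> A), h (ops A s args) = ops B s (fun i => h (args i)).

Arguments hom {S A B} h.

Definition surj (A B : Type) (h : A -> B) : Prop := forall b, exists a, h a = b.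

(* Commutative variety: every hom-set D(A,B) is a subalgebra of B^|A|,
   i.e. closed under pointwise operations. *)
Arguments surj {A B} h.

Definition commutative_variety (D : variety) : Prop :=
  forall (A B : alg (vsig D)), model D A -> model D B ->
  forall (s : sym (vsig D)) (hs : 'I_(arity _ s) -> A -> B),
    (forall i, hom (hs i)) -> hom (fun a => ops B s (fun i => hs i a)).

(* Finitely presentable object: an algebra of D presentable by finitely many
   generators g and finitely many relations R, i.e. A is generated by g,
   satisfies R, and every equation holding in A under g holds under any
   assignment satisfying R in any algebra of D (A = F(n)/<R>). *)
Definition fpres (D : variety) (A : alg (vsig D)) : Prop :=
  model D A /\
  exists (n : nat) (R : seq (term (vsig D) 'I_n * term (vsig D) 'I_n)) (g : 'I_n -> A),
    (forall a : A, exists t, eval g t = a) /\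
    (forall p, List.In p R -> eval g p.1 = eval g p.2) /\
    (forall (B : alg (vsig D)), model D B ->
       forall w : 'I_n -> B, (forall p, List.In p R -> eval w p.1 = eval w p.2) ->
       forall s t, eval g s = eval g t -> eval w s = eval w t).

Arguments fpres D A.

Definition unitAlg (S : signature) : alg S := @Alg S unit (fun _ _ => tt).
Definition prodAlg (S : signature) (A B : alg S) : alg S :=
  @Alg S (A * B)%type (fun s args => (ops A s (fun i => (args i).1), ops B s (fun i => (args i).2))).

Arguments prodAlg {S} A B.

(* D_f closed under subobjects (monos = injective homs), strong quotients
   (= surjective homs) and finite products. *)
Definition Df_closed (D : variety) : Prop :=
  (forall (A B : alg (vsig D)), fpres D A -> model D B ->
     forall m : B -> A, hom m -> injective m -> fpres D B) /\
  (forall (A B : alg (vsig D)), fpres D A -> model D B ->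
     forall e : A -> B, hom e -> surj e -> fpres D B) /\
  fpres D (unitAlg (vsig D)) /\
  (forall (A B : alg (vsig D)), fpres D A -> fpres D B -> fpres D (prodAlg A B)).

(* bimorphisms A x B -> C  (= morphisms A (x) B -> C) *)
Definition bimor (S : signature) (A B C : alg S) (h : A -> B -> C) : Prop :=
  (forall a, hom (h a)) /\ (forall b, hom (fun a => h a b)).

Arguments bimor {S A B C} h.

(* The unit I -> M is represented by an element of M (I = Psi 1 is free on 1). *)
Record dmon (S : signature) := DMon {
  mcar : alg S;
  mmul : mcar -> mcar -> mcar;
  munit : mcar }.

Arguments mcar {S} _.
Arguments mmul {S} _ _ _.
Arguments munit {S} _.

Definition is_dmon (D : variety) (M : dmon (vsig D)) : Prop :=
  model D (mcar M) /\ bimor (mmul M) /\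
  (forall a b c, mmul M a (mmul M b c) = mmul M (mmul M a b) c) /\
  (forall a, mmul M (munit M) a = a) /\ (forall a, mmul M a (munit M) = a).

Arguments is_dmon D M.

Definition monmor (S : signature) (M N : dmon S) (h : mcar M -> mcar N) : Prop :=
  hom h /\ h (munit M) = munit N /\ forall a b, h (mmul M a b) = mmul N (h a) (h b).

Arguments monmor {S M N} h.

Definition free_dmon (D : variety) (X : alg (vsig D)) (Xs : dmon (vsig D))
    (eta : X -> mcar Xs) : Prop :=
  is_dmon D Xs /\ hom eta /\
  forall M : dmon (vsig D), is_dmon D M -> forall h : X -> mcar M, hom h ->
    (exists h', monmor h' /\ forall x, h' (eta x) = h x) /\
    (forall h1 h2 : mcar Xs -> mcar M, monmor h1 -> monmor h2 ->
       (forall x, h1 (eta x) = h x) -> (forall x, h2 (eta x) = h x) ->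
       forall a, h1 a = h2 a).

Arguments free_dmon D X Xs eta.

Definition recognizes (S : signature) (Xs : dmon S) (Y : alg S) (L : mcar Xs -> Y)
    (M : dmon S) (e : mcar Xs -> mcar M) : Prop :=
  monmor e /\ exists f : mcar M -> Y, hom f /\ forall w, L w = f (e w).

Arguments recognizes {S Xs Y} L {M} e.

(* delta : X (x) Q -> Q as a bimorphism, i : I -> Q as an element, f : Q -> Y *)
Record automaton (S : signature) (X Y : alg S) := Automaton {
  qcar : alg S;
  delta : X -> qcar -> qcar;
  init : qcar;
  fin : qcar -> Y }.

Arguments qcar {S X Y} _.
Arguments delta {S X Y} _ _ _.
Arguments init {S X Y} _.
Arguments fin {S X Y} _ _.

Definition is_aut (D : variety) (X Y : alg (vsig D)) (Q : automaton _ X Y) : Prop :=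
  model D (qcar Q) /\ bimor (delta Q) /\ hom (fin Q).

Arguments is_aut D {X Y} Q.

(* e is the F-algebra homomorphism (F Q = I + X (x) Q) from the initial
   F-algebra Xs (structure [unit, mul o (eta (x) id)]) into Q with
   I-component q, i.e. the run map starting in state q. *)
Definition run_from (S : signature) (X Y : alg S) (Xs : dmon S) (eta : X -> mcar Xs)
    (Q : automaton _ X Y) (q : qcar Q) (e : mcar Xs -> qcar Q) : Prop :=
  hom e /\ e (munit Xs) = q /\ forall x w, e (mmul Xs (eta x) w) = delta Q x (e w).

Arguments run_from {S X Y Xs} eta Q q e.

Definition accepts (S : signature) (X Y : alg S) (Xs : dmon S) (eta : X -> mcar Xs)
    (Q : automaton _ X Y) (L : mcar Xs -> Y) : Prop :=
  exists e, run_from eta Q (init Q) e /\ forall w, fin Q (e w) = L w.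

Arguments accepts {S X Y Xs} eta Q L.

Definition reachable (S : signature) (X Y : alg S) (Xs : dmon S) (eta : X -> mcar Xs)
    (Q : automaton _ X Y) : Prop :=
  exists e, run_from eta Q (init Q) e /\ surj e.

Arguments reachable {S X Y Xs} eta Q.

(* simple: the coalgebra morphism q |-> (w |-> f (e_q w)) into the final
   coalgebra [Xs, Y] is injective *)
Definition simple (S : signature) (X Y : alg S) (Xs : dmon S) (eta : X -> mcar Xs)
    (Q : automaton _ X Y) : Prop :=
  forall (q1 q2 : qcar Q) e1 e2, run_from eta Q q1 e1 -> run_from eta Q q2 e2 ->
    (forall w, fin Q (e1 w) = fin Q (e2 w)) -> q1 = q2.

Arguments simple {S X Y Xs} eta Q.

From mathcomp Require Import all_boot.
From Stdlib Require Import ClassicalEpsilon FunctionalExtensionality ProofIrrelevance.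

(** The minimal automaton has as states the image of [w |-> (u |-> L (u w))],
   and the syntactic monoid the image of [w |-> (u, v |-> L (u w v))].  Both
   maps identify everything a finitely presentable recognizer identifies: the
   run of an automaton [Q] in the first case, and in the second the map
   [w |-> (e_Q (w v_i))_i] into [Q^n], where the [e_Q v_i] generate the
   reachable part of [Q].  Hence both images are strong quotients of
   subobjects of finitely presentable algebras.  Conversely a recognizing
   monoid [M] is itself an automaton with transitions [x, m |-> e (eta x) m]. *)

Lemma sig_val_inj (T : Type) (P : T -> Prop) (x y : {a | P a}) :
  proj1_sig x = proj1_sig y -> x = y.
Proof. by case: x; case: y => b pb a pa /= Eab; apply: subset_eq_compat. Qed.

Section UniversalAlgebra.
Context {D : variety}.
Notation S := (vsig D).

Lemma hom_eval {A B : alg S} {h : A -> B} {V} (v : V -> A) (t : term S V) :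
  hom h -> h (eval v t) = eval (fun x => h (v x)) t.
Proof.
move=> hh; elim: t => [x|s ts IH] //=.
by rewrite hh; congr (ops B s _); apply: functional_extensionality.
Qed.

Definition funAlg (T : Type) (B : alg S) : alg S :=
  @Alg S (T -> B) (fun s args t => ops B s (fun i => args i t)).

Lemma model_funAlg T {B : alg S} : model D B -> model D (funAlg T B).
Proof.
move=> mB l r Elr v; apply: functional_extensionality => t.
have evt : hom (fun f : funAlg T B => f t) by [].
by rewrite (hom_eval v l evt) (hom_eval v r evt); apply: mB.
Qed.

Lemma model_inj {A B : alg S} {m : B -> A} :
  model D A -> hom m -> injective m -> model D B.
Proof. by move=> mA hm m_inj l r Elr v; apply: m_inj; rewrite !hom_eval //; apply: mA. Qed.

Lemma hom_factor_surj {A B C : alg S} {p : A -> B} {g : A -> C} :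
  hom p -> surj p -> hom g -> (forall a1 a2, p a1 = p a2 -> g a1 = g a2) ->
  exists k : B -> C, hom k /\ forall a, k (p a) = g a.
Proof.
move=> hp sp hg pg.
have /choice [r pr] : forall b, exists a, p a = b by [].
have kp a : g (r (p a)) = g a by apply: pg; rewrite pr.
exists (fun b => g (r b)); split=> // s args.
have -> : ops B s args = p (ops A s (fun i => r (args i))).
  by rewrite hp; congr (ops B s _); apply: functional_extensionality => i; rewrite pr.
by rewrite kp hg.
Qed.

Section Image.
Context {A B : alg S} {f : A -> B} (hf : hom f).

Lemma im_closed s (args : 'I_(arity _ s) -> B) :
  (forall i, exists a, f a = args i) -> exists a, f a = ops B s args.
Proof.
move=> /choice [r fr]; exists (ops A s r).
by rewrite hf; congr (ops B s _); apply: functional_extensionality.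
Qed.

Definition imAlg : alg S :=
  @Alg S {b | exists a, f a = b}
    (fun s args => exist _ (ops B s (fun i => proj1_sig (args i)))
                          (@im_closed s _ (fun i => proj2_sig (args i)))).

Definition to_im (a : A) : imAlg := exist _ (f a) (ex_intro _ a erefl).

Definition im_val (b : imAlg) : B := proj1_sig b.

Lemma to_im_hom : hom to_im.
Proof. by move=> s args; apply: (@sig_val_inj B) => /=; apply: hf. Qed.

Definition im_pre (b : imAlg) : A :=
  proj1_sig (constructive_indefinite_description _ (proj2_sig b)).

Lemma im_pre_spec b : f (im_pre b) = im_val b.
Proof. exact: proj2_sig (constructive_indefinite_description _ (proj2_sig b)). Qed.

Lemma to_im_pre b : to_im (im_pre b) = b.
Proof. exact: (@sig_val_inj B _ (to_im _) b (im_pre_spec b)). Qed.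

Lemma to_im_surj : surj to_im.
Proof. by move=> b; exists (im_pre b); apply: to_im_pre. Qed.

Lemma to_im_eq a1 a2 : f a1 = f a2 -> to_im a1 = to_im a2.
Proof. exact: (@sig_val_inj B _ (to_im a1) (to_im a2)). Qed.

Lemma im_val_hom : hom im_val.
Proof. by []. Qed.

Lemma im_val_inj : injective im_val.
Proof. exact: (@sig_val_inj B). Qed.

Lemma model_imAlg : model D B -> model D imAlg.
Proof. by move=> mB; apply: (model_inj mB im_val_hom im_val_inj). Qed.

Lemma hom_from_im (C : alg S) (k : imAlg -> C) :
  (forall s args, k (to_im (ops A s args)) = ops C s (fun i => k (to_im (args i)))) ->
  hom k.
Proof.
move=> kE s args.
have -> : args = (fun i => to_im (im_pre (args i))).
  by apply: functional_extensionality => i; rewrite to_im_pre.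
by rewrite -to_im_hom.
Qed.

End Image.
End UniversalAlgebra.

Arguments im_val {D A B f hf} b.
Arguments im_pre {D A B f hf} b.

Section FinitelyPresentable.
Context {D : variety}.
Notation S := (vsig D).
Hypothesis hDf : Df_closed D.

Lemma fpres_imAlg {A B : alg S} {f : A -> B} (hf : hom f) :
  fpres D B -> fpres D (imAlg hf).
Proof.
move=> fB; apply: (hDf.1 _ _ fB (model_imAlg hf fB.1) im_val).
  exact: im_val_hom.
exact: im_val_inj.
Qed.

Lemma fpres_im_of_kernel {A B C : alg S} {f : A -> B} {g : A -> C} (hf : hom f) (hg : hom g) :
  fpres D B -> model D C -> (forall a1 a2, f a1 = f a2 -> g a1 = g a2) ->
  fpres D (imAlg hg).
Proof.
move=> fB mC fg.
have [|k [hk kE]] := hom_factor_surj (to_im_hom hf) (to_im_surj hf) (to_im_hom hg).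
  by move=> a1 a2 /(f_equal im_val) /fg; apply: to_im_eq.
apply: (hDf.2.1 _ _ (fpres_imAlg hf fB) (model_imAlg hg mC) k hk) => b.
by have [a <-] := to_im_surj hg b; exists (to_im hf a).
Qed.

Lemma fpres_im_gen {A B : alg S} {f : A -> B} (hf : hom f) :
  fpres D (imAlg hf) ->
  exists n (v : 'I_n -> A), forall a, exists t, f a = eval (fun i => f (v i)) t.
Proof.
case=> _ [n [_ [g [g_gen _]]]].
have /choice [v vE] := fun i => to_im_surj hf (g i).
exists n, v => a; have [t gt] := g_gen (to_im hf a); exists t.
rewrite -[f a]/(im_val (to_im hf a)) -gt (hom_eval _ _ (im_val_hom hf)).
by congr (eval _ t); apply: functional_extensionality => i; rewrite -vE.
Qed.

Lemma fpres_pow {Q : alg S} : fpres D Q -> forall n, fpres D (funAlg 'I_n Q).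
Proof.
case: hDf => [_ [hquo [hunit hprod]]] fQ.
elim=> [|n IH].
  apply: (hquo _ _ hunit (model_funAlg _ fQ.1) (fun _ => (ffun0 (card_ord 0) : 'I_0 -> Q))).
    by move=> s args; apply: functional_extensionality; case.
  by move=> b; exists tt; apply: functional_extensionality; case.
pose m (qf : prodAlg Q (funAlg 'I_n Q)) : funAlg 'I_n.+1 Q :=
  fun i => if unlift ord0 i is Some j then qf.2 j else qf.1.
apply: (hquo _ _ (hprod _ _ fQ IH) (model_funAlg _ fQ.1) m).
  move=> s args; apply: functional_extensionality => i /=.
  by rewrite /m; case: (unlift ord0 i).
move=> b; exists (b ord0, fun j => b (lift ord0 j)); apply: functional_extensionality => i.
by rewrite /m /=; case: (unliftP ord0 i) => [j ->|->].
Qed.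

End FinitelyPresentable.

Section DMonoid.
Context {D : variety} {M : dmon (vsig D)} (dM : is_dmon D M).
Local Notation mul := (mmul M).

Lemma model_dmon : model D (mcar M).
Proof. by case: dM. Qed.

Lemma mmulA a b c : mul a (mul b c) = mul (mul a b) c.
Proof. by case: dM => _ [_ [mulA _]]. Qed.

Lemma mmul1m a : mul (munit M) a = a.
Proof. by case: dM => _ [_ [_ [mul1m _]]]. Qed.

Lemma mmulm1 a : mul a (munit M) = a.
Proof. by case: dM => _ [_ [_ [_ mulm1]]]. Qed.

Lemma mmul_homl a : hom (mul a).
Proof. by case: dM => _ [[homl _] _]. Qed.

Lemma mmul_homr b : hom (fun a => mul a b).
Proof. by case: dM => _ [[_ homr] _]. Qed.

End DMonoid.

Section FreeDMonoid.
Context {D : variety} {X : alg (vsig D)} {Xs : dmon (vsig D)} {eta : X -> mcar Xs}.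
Hypothesis fXs : free_dmon D X Xs eta.
Local Notation M := (mcar Xs).
Local Notation mul := (mmul Xs).
Let dXs : is_dmon D Xs := fXs.1.

(* The elements satisfying [P] form a sub-D-monoid containing the generators,
   on which the two extensions of [eta] must agree. *)
Lemma free_dmon_ind (P : M -> Prop) :
  (forall s args, (forall i, P (args i)) -> P (ops M s args)) -> P (munit Xs) ->
  (forall a b, P a -> P b -> P (mul a b)) -> (forall x, P (eta x)) -> forall w, P w.
Proof.
move=> Pops P1 Pmul Peta.
case: fXs => [_ [heta univ]].
pose sub := @Alg (vsig D) {a | P a}
  (fun s args => exist P (ops M s (fun i => proj1_sig (args i)))
                         (Pops s _ (fun i => proj2_sig (args i)))).
pose subM := @DMon _ sub (fun a b => exist P (mul (proj1_sig a) (proj1_sig b))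
                                        (Pmul _ _ (proj2_sig a) (proj2_sig b)))
                         (exist P _ P1).
have val_hom : hom (fun a : sub => proj1_sig a) by [].
have dsub : is_dmon D subM.
  split; first by apply: (model_inj (model_dmon dXs) val_hom) => a b; apply: sig_val_inj.
  split; first by split=> a s args; apply: sig_val_inj => /=;
    [apply: (mmul_homl dXs) | apply: (mmul_homr dXs)].
  split; first by move=> a b c; apply: sig_val_inj; apply: (mmulA dXs).
  by split=> a; apply: sig_val_inj; [apply: (mmul1m dXs) | apply: (mmulm1 dXs)].
have heta' : hom (fun x => exist P (eta x) (Peta x) : mcar subM).
  by move=> s args; apply: sig_val_inj => /=; apply: heta.
have [[h [[hh [h1 hmul]] heta_h]] _] := univ subM dsub _ heta'.
have [_ eta_unique] := univ Xs dXs eta heta.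
have valhK w : proj1_sig (h w) = w.
  apply: (eta_unique (fun a => proj1_sig (h a)) id) => [||x|] //=.
    by split; [move=> s args /=; rewrite hh | split; [rewrite h1 | move=> a b; rewrite hmul]].
  by rewrite heta_h.
by move=> w; rewrite -(valhK w); apply: proj2_sig.
Qed.

Section Runs.
Context {Y : alg (vsig D)} {Q : automaton _ X Y}.

Lemma run_from_unique {q e1 e2} :
  run_from eta Q q e1 -> run_from eta Q q e2 -> forall w, e1 w = e2 w.
Proof.
move=> [h1 [u1 d1]] [h2 [u2 d2]].
suff cong u v : e1 v = e2 v -> e1 (mul u v) = e2 (mul u v).
  by move=> w; rewrite -(mmulm1 dXs w); apply: cong; rewrite u1 u2.
elim/free_dmon_ind: u v => [s args IH v Ev|v Ev|a b IHa IHb v Ev|x v Ev].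
- rewrite (mmul_homr dXs) h1 h2; congr (ops _ s _).
  by apply: functional_extensionality => i; apply: IH.
- by rewrite (mmul1m dXs).
- by rewrite -!(mmulA dXs); apply: IHa; apply: IHb.
- by rewrite d1 d2 Ev.
Qed.

Lemma run_from_shift {q e} : run_from eta Q q e ->
  forall w, run_from eta Q (e w) (fun u => e (mul u w)).
Proof.
move=> [h [u d]] w; split; first by move=> s args /=; rewrite (mmul_homr dXs) h.
by split=> [|x v]; [rewrite (mmul1m dXs) | rewrite -(mmulA dXs) d].
Qed.

Lemma run_from_rcong {q e} : run_from eta Q q e ->
  forall w1 w2, e w1 = e w2 -> forall u, e (mul u w1) = e (mul u w2).
Proof.
move=> r w1 w2 Ew u; have r2 := run_from_shift r w2; rewrite -Ew in r2.
exact: run_from_unique (run_from_shift r w1) r2 u.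
Qed.

(* [w] may be replaced by a term in the [v_i] reaching the same state, and
   [e (mul w1 _)] is a homomorphism. *)
Lemma run_from_mulr_gen {q e n} (v : 'I_n -> M) : run_from eta Q q e ->
  (forall w, exists t, e w = eval (fun i => e (v i)) t) ->
  forall w1 w2, (forall i, e (mul w1 (v i)) = e (mul w2 (v i))) ->
  forall w, e (mul w1 w) = e (mul w2 w).
Proof.
move=> r gen w1 w2 Ev w; have [t Et] := gen w.
have he : hom e := r.1.
have eE : e (eval v t) = e w by rewrite (hom_eval _ _ he) Et.
have mulr_eval u : e (mul u (eval v t)) = eval (fun i => e (mul u (v i))) t.
  by apply: (hom_eval (h := fun x => e (mul u x))) => s args /=; rewrite (mmul_homl dXs) he.
rewrite -!(run_from_rcong r _ _ eE) !mulr_eval.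
by congr (eval _ t); apply: functional_extensionality.
Qed.

End Runs.
End FreeDMonoid.

Section Language.
Context {D : variety} {X Y : alg (vsig D)} {Xs : dmon (vsig D)} {eta : X -> mcar Xs}.
Hypotheses (fXs : free_dmon D X Xs eta) (mY : model D Y).
Variable L : mcar Xs -> Y.
Hypothesis hL : hom L.
Local Notation M := (mcar Xs).
Local Notation mul := (mmul Xs).
Let dXs : is_dmon D Xs := fXs.1.

Definition lquot (w : M) : funAlg M Y := fun u => L (mul u w).

Lemma lquot_hom : hom lquot.
Proof.
move=> s args; apply: functional_extensionality => u.
by rewrite /lquot (mmul_homl dXs) hL.
Qed.

Definition lquot_act (x : X) (phi : funAlg M Y) : funAlg M Y := fun u => phi (mul u (eta x)).

Lemma lquot_mul x w : lquot (mul (eta x) w) = lquot_act x (lquot w).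
Proof. by apply: functional_extensionality => u; rewrite /lquot /lquot_act (mmulA dXs). Qed.

Lemma lquot_act_im x (b : imAlg lquot_hom) : exists w, lquot w = lquot_act x (im_val b).
Proof. by case: b => _ [w /= <-]; exists (mul (eta x) w); apply: lquot_mul. Qed.

Definition minAut_delta (x : X) (b : imAlg lquot_hom) : imAlg lquot_hom :=
  exist _ _ (lquot_act_im x b).

Definition minAut : automaton _ X Y :=
  @Automaton _ X Y (imAlg lquot_hom) minAut_delta (to_im lquot_hom (munit Xs))
    (fun b => im_val b (munit Xs)).

Lemma minAut_is_aut : is_aut D minAut.
Proof.
split; first exact: model_imAlg (model_funAlg _ mY).
split=> //; split=> [x s args | b s args]; apply: (@sig_val_inj (funAlg M Y)) => //=.
case: b => phi [w Ew]; subst phi; apply: functional_extensionality => u /=.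
by rewrite /lquot_act /lquot fXs.2.1 (mmul_homl dXs) (mmul_homr dXs) hL.
Qed.

Lemma minAut_run : run_from eta minAut (init minAut) (to_im lquot_hom).
Proof.
split; first exact: to_im_hom.
by split=> // x w; apply: (@sig_val_inj (funAlg M Y)); apply: lquot_mul.
Qed.

Lemma minAut_accepts : accepts eta minAut L.
Proof.
exists (to_im lquot_hom); split=> [|w]; first exact: minAut_run.
by rewrite /= /lquot (mmul1m dXs).
Qed.

Lemma minAut_reachable : reachable eta minAut.
Proof. by exists (to_im lquot_hom); split; [apply: minAut_run | apply: to_im_surj]. Qed.

(* The run from [to_im a] is the shifted canonical run [u |-> to_im (u a)]. *)
Lemma minAut_fin_run {q e} : run_from eta minAut q e ->
  forall u, fin minAut (e u) = im_val q u.
Proof.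
have [a <-] := to_im_surj lquot_hom q => r u.
rewrite (run_from_unique fXs r (run_from_shift fXs minAut_run a)) /=.
by rewrite /lquot (mmul1m dXs).
Qed.

Lemma minAut_simple : simple eta minAut.
Proof.
move=> q1 q2 e1 e2 r1 r2 Efin; apply: (@sig_val_inj (funAlg M Y)).
apply: functional_extensionality => u; change (im_val q1 u = im_val q2 u).
by rewrite -(minAut_fin_run r1) -(minAut_fin_run r2).
Qed.

Definition ctxt (w : M) : funAlg M (funAlg M Y) := fun u v => L (mul (mul u w) v).

Lemma ctxt_hom : hom ctxt.
Proof.
move=> s args; do 2 apply: functional_extensionality => ?.
by rewrite /ctxt /= (mmul_homl dXs) (mmul_homr dXs) hL.
Qed.

Lemma ctxt_mul a a' b b' : ctxt a = ctxt a' -> ctxt b = ctxt b' ->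
  ctxt (mul a b) = ctxt (mul a' b').
Proof.
move=> Ea Eb; apply: functional_extensionality => u; apply: functional_extensionality => v.
transitivity (ctxt a u (mul b v)); first by rewrite /ctxt !(mmulA dXs).
rewrite Ea; transitivity (ctxt b (mul u a') v); first by rewrite /ctxt !(mmulA dXs).
by rewrite Eb /ctxt !(mmulA dXs).
Qed.

Definition synMon_mul (b1 b2 : imAlg ctxt_hom) : imAlg ctxt_hom :=
  to_im ctxt_hom (mul (im_pre b1) (im_pre b2)).

Definition synMon : dmon (vsig D) :=
  @DMon _ (imAlg ctxt_hom) synMon_mul (to_im ctxt_hom (munit Xs)).

Lemma synMon_mul_to_im a b :
  mmul synMon (to_im ctxt_hom a) (to_im ctxt_hom b) = to_im ctxt_hom (mul a b).
Proof.
by apply: to_im_eq; apply: ctxt_mul; apply: im_pre_spec (to_im ctxt_hom _).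
Qed.

Lemma synMon_is_dmon : is_dmon D synMon.
Proof.
have rE := to_im_pre ctxt_hom.
split; first exact: model_imAlg (model_funAlg _ (model_funAlg _ mY)).
split.
  split=> b; rewrite -(rE b); apply: hom_from_im => s args;
    rewrite synMon_mul_to_im ?(mmul_homl dXs) ?(mmul_homr dXs) to_im_hom;
    by congr (ops _ s _); apply: functional_extensionality => i; rewrite synMon_mul_to_im.
split; first by move=> b1 b2 b3; rewrite -(rE b1) -(rE b2) -(rE b3) !synMon_mul_to_im (mmulA dXs).
by split=> b; rewrite -(rE b) synMon_mul_to_im ?(mmul1m dXs) ?(mmulm1 dXs).
Qed.

Lemma synMon_proj_monmor : @monmor _ Xs synMon (to_im ctxt_hom).
Proof. by split; [apply: to_im_hom | split=> // a b; rewrite synMon_mul_to_im]. Qed.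

Lemma synMon_recognizes : recognizes L (to_im ctxt_hom : M -> mcar synMon).
Proof.
split; first exact: synMon_proj_monmor.
exists (fun b : mcar synMon => im_val b (munit Xs) (munit Xs)); split=> // w.
by rewrite /= /ctxt (mmul1m dXs) (mmulm1 dXs).
Qed.

Lemma synMon_min (N : dmon (vsig D)) (e : M -> mcar N) :
  is_dmon D N -> recognizes L e -> surj e ->
  exists h : mcar N -> mcar synMon, monmor h /\ forall w, to_im ctxt_hom w = h (e w).
Proof.
move=> dN [[he [e1 emul]] [f [hf Lf]]] se.
have [|k [hk kE]] := hom_factor_surj he se (to_im_hom ctxt_hom).
  move=> a1 a2 Ea; apply: to_im_eq.
  do 2 apply: functional_extensionality => ?.
  by rewrite /ctxt !Lf !emul Ea.
exists k; split=> [|w]; last by rewrite kE.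
split=> //; split=> [|m1 m2]; first by rewrite -e1 kE. have [a1 <-] := se m1; have [a2 <-] := se m2.
by rewrite -emul !kE synMon_mul_to_im.
Qed.

Definition dmon_aut {N : dmon (vsig D)} (e : M -> mcar N) (f : mcar N -> Y) : automaton _ X Y :=
  @Automaton _ X Y (mcar N) (fun x m => mmul N (e (eta x)) m) (munit N) f.

Lemma dmon_aut_accepts {N : dmon (vsig D)} {e : M -> mcar N} {f : mcar N -> Y} :
  is_dmon D N -> monmor e -> hom f -> (forall w, L w = f (e w)) ->
  is_aut D (dmon_aut e f) /\ accepts eta (dmon_aut e f) L.
Proof.
move=> dN [he [e1 emul]] hf Lf; split.
  split; first exact: model_dmon dN.
  split=> //; split=> [x | m s args /=]; first exact: mmul_homl dN _.
  by rewrite fXs.2.1 he; apply: (mmul_homr dN).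
exists e; split=> [|w]; last by rewrite Lf.
by split=> //; split=> // x w; rewrite emul.
Qed.

Hypothesis hDf : Df_closed D.

Lemma fpres_minAut {Q : automaton _ X Y} :
  fpres D (qcar Q) -> accepts eta Q L -> fpres D (qcar minAut).
Proof.
move=> fQ [e [re acc]]; apply: (fpres_im_of_kernel hDf re.1 _ fQ (model_funAlg _ mY)).
move=> a1 a2 Ea; apply: functional_extensionality => u.
by rewrite /lquot -!acc (run_from_rcong fXs re _ _ Ea).
Qed.

Lemma fpres_synMon {Q : automaton _ X Y} :
  fpres D (qcar Q) -> accepts eta Q L -> fpres D (mcar synMon).
Proof.
move=> fQ [e [re acc]]; have he : hom e := re.1.
have [n [v gen]] := fpres_im_gen he (fpres_imAlg hDf he fQ).
pose psi (w : M) : funAlg 'I_n (qcar Q) := fun i => e (mul w (v i)).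
have hpsi : hom psi.
  by move=> s args; apply: functional_extensionality => i; rewrite /psi (mmul_homr dXs) he.
apply: (fpres_im_of_kernel hDf hpsi _ (fpres_pow hDf fQ n) (model_funAlg _ (model_funAlg _ mY))).
move=> a1 a2 Ea; apply: functional_extensionality => u; apply: functional_extensionality => w.
have Eaw := run_from_mulr_gen fXs v re gen _ _ (fun i => congr1 (fun g => g i) Ea) w.
by rewrite /ctxt -!acc -!(mmulA dXs) (run_from_rcong fXs re _ _ Eaw).
Qed.

End Language.

Theorem mainTheorem11 (D : variety) (X Y : alg (vsig D)) (Xs : dmon (vsig D))
    (eta : X -> mcar Xs) (L : mcar Xs -> Y) :
  commutative_variety D -> Df_closed D ->
  model D X -> model D Y -> free_dmon D X Xs eta -> hom L ->
  let a := exists Q : automaton _ X Y, is_aut D Q /\ fpres D (qcar Q) /\ accepts eta Q L in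
  let b := exists Q : automaton _ X Y, is_aut D Q /\ reachable eta Q /\ simple eta Q /\
             accepts eta Q L /\ fpres D (qcar Q) in
  let c := exists (M : dmon (vsig D)) (e : mcar Xs -> mcar M),
             is_dmon D M /\ recognizes L e /\ fpres D (mcar M) in
  let d := exists (M : dmon (vsig D)) (e : mcar Xs -> mcar M),
             is_dmon D M /\ recognizes L e /\ surj e /\
             (forall (M' : dmon (vsig D)) (e' : mcar Xs -> mcar M'),
                is_dmon D M' -> recognizes L e' -> surj e' ->
                exists h : mcar M' -> mcar M, monmor h /\ forall w, e w = h (e' w)) /\
             fpres D (mcar M) in
  (a <-> b) /\ (a <-> c) /\ (a <-> d).
Proof.
move=> _ hDf _ mY fXs hL a b c d.
have c_to_a : c -> a.
  move=> [N [e [dN [[me [f [hf Lf]]] fN]]]].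
  have [aut acc] := dmon_aut_accepts fXs L dN me hf Lf.
  by exists (dmon_aut (eta := eta) e f).
have a_to_d : a -> d.
  move=> [Q [_ [fQ acc]]]; exists (synMon fXs L hL), (to_im (ctxt_hom fXs L hL)).
  split; first exact: synMon_is_dmon.
  split; first exact: synMon_recognizes.
  split; first exact: to_im_surj.
  by split; [apply: synMon_min | apply: fpres_synMon acc].
have d_to_c : d -> c by move=> [N [e [dN [rec [_ [_ fN]]]]]]; exists N, e.
split; [split | split; split] => //.
- move=> [Q [_ [fQ acc]]]; exists (minAut fXs L hL).
  split; first exact: minAut_is_aut.
  split; first exact: minAut_reachable.
  split; first exact: minAut_simple.
  by split; [apply: minAut_accepts | apply: fpres_minAut acc].
- by move=> [Q [aut [_ [_ [acc fQ]]]]]; exists Q.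
- by move/a_to_d/d_to_c.
- by move/d_to_c/c_to_a.
Qed.
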